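(* Let $(X,d)$ be a compact metric space, $\mu$ a Borel measure on $X$ with $\mu(X)>0$, $\{f_n\}_{n\in\mathbb{N}}$ a sequence of homeomorphisms of $X$ and $f$ a homeomorphism of $X$ such that $f_n\to f$ uniformly and $f_n^{-1}\to f^{-1}$ uniformly on $X$. Then $x\in UE^\mu_f(X)$ if and only if there exists $\delta>0$ such that for each $z\in B(x,\delta)$, $$\mu\Big(\Big\{y\in B(x,\delta):\ \bigcup_{m\ge 1}\bigcap_{n\ge m}E_z\big(f_n,y,\tfrac{\delta}{3}\big)=\emptyset\Big\}\Big)=0.$$
   Context: $B(x,\epsilon)=\{y:d(x,y)<\epsilon\}$. For a homeomorphism $g$ of $X$, $x,y\in X$ and $\epsilon>0$, $E_y(g,x,\epsilon)=\{k\in\mathbb{Z}: d(g^k(x),g^k(y))>\epsilon\}$. For a point $x$, $\mathfrak{c}>0$ and $z\in B(x,\mathfrak{c})$, $\Gamma^{\mathfrak{c}}_f(z)=\{y\in B(x,\mathfrak{c}): d(f^n(y),f^n(z))\le\mathfrak{c}\ \forall n\in\mathbb{Z}\}$. $x$ is a $\mu$-uniformly expansive point of $f$ if there is $\mathfrak{c}>0$ with $\mu(\Gamma^{\mathfrak{c}}_f(z))=0$ for every $z\in B(x,\mathfrak{c})$; $UE^\mu_f(X)$ is the set of such points. *)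

From HB Require Import structures.
From mathcomp Require Import all_boot all_order all_algebra.
From mathcomp Require Import all_classical all_reals all_analysis.
Set Implicit Arguments. Unset Strict Implicit. Unset Printing Implicit Defensive.
Import Order.TTheory GRing.Theory Num.Theory.
Local Open Scope classical_set_scope.
Local Open Scope ring_scope.

(* Metric spaces equipped with a designated point (harmless here: mu(X) > 0
   forces X to be nonempty); the point is needed by g_sigma_algebraType. *)
#[short(type="pmetricType")]
HB.structure Definition PointedMetric (K : numDomainType) :=
  { M of Metric K M & isPointed M }.

Notation borel_type X := (g_sigma_algebraType (@open X)).

Section Defs.
Context {R : realType} {X : pmetricType R}.


Definition Bd (x : X) (e : R) : set X := [set y | mdist x y < e].

Definition homeo_with (g ginv : X -> X) : Prop :=
  cancel g ginv /\ cancel ginv g /\ continuous g /\ continuous ginv.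

Definition zit (g ginv : X -> X) (k : int) : X -> X :=
  match k with
  | Posz n => iter n g
  | Negz n => iter n.+1 ginv
  end.

Definition unif_cvg (gs : nat -> X -> X) (g : X -> X) : Prop :=
  forall e : R, 0 < e -> exists N : nat, forall n, (N <= n)%N ->
    forall x, mdist (gs n x) (g x) < e.

(* E_y(g,x,e) = {k in Z : d(g^k x, g^k y) > e}. *)
Definition Eset (g ginv : X -> X) (y x : X) (e : R) : set int :=
  [set k | e < mdist (zit g ginv k x) (zit g ginv k y)].

Definition Gamma (f finv : X -> X) (x : X) (c : R) (z : X) : set X :=
  [set y | Bd x c y /\ forall n : int,
     mdist (zit f finv n y) (zit f finv n z) <= c].

Definition UE_point (mu : set (borel_type X) -> \bar R) (f finv : X -> X) (x : X)
  : Prop :=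
  exists c : R, 0 < c /\ forall z, Bd x c z -> mu (Gamma f finv x c z) = 0%E.

End Defs.

(* Uniform convergence and continuity of f and f^-1 give f_n^k y --> f^k y for
   every k in Z, hence d(f_n^k y, f_n^k z) --> d(f^k y, f^k z).  So if the
   liminf of the sets E_z(f_n, y, e) is empty, i.e. for every k infinitely many
   n have d(f_n^k y, f_n^k z) <= e, then d(f^k y, f^k z) <= e for all k;
   conversely d(f^k y, f^k z) <= c < e for all k makes that liminf empty.  Hence
   the set of the statement for delta lies in Gamma^delta_f(z), Gamma^(delta/4)_f(z)
   lies in the set for delta, and null sets pass to measurable subsets. *)

From HB Require Import structures.
From mathcomp Require Import all_boot all_order all_algebra.
From mathcomp Require Import all_classical all_reals all_analysis.
From mathcomp Require Import lra.
Import Order.TTheory GRing.Theory Num.Theory numFieldNormedType.Exports.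
Local Open Scope classical_set_scope.
Local Open Scope ring_scope.

Section mdist_continuity.
Context {R : realFieldType} {M : metricType R}.

Lemma ler_dist_mdist (a b a' b' : M) :
  `|mdist a b - mdist a' b'| <= mdist a a' + mdist b b'.
Proof.
have := metric_triangle a a' b; have := metric_triangle a' b' b.
have := metric_triangle a' a b'; have := metric_triangle a b b'.
rewrite (metric_sym a' a) (metric_sym b' b) ler_norml => t1 t2 t3 t4.
by apply/andP; split; lra.
Qed.

Lemma cvg_mdist {T} {F : set_system T} {FF : Filter F} (u v : T -> M) (a b : M) :
  u @ F --> a -> v @ F --> b ->
  (fun t => mdist (u t) (v t) : R) @ F --> (mdist a b : R).
Proof.
move=> ua vb; apply/cvgrPdist_lt => e e0; near=> t.
rewrite (le_lt_trans (ler_dist_mdist _ _ _ _)) // (splitr e) ltrD //; near: t.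
- by apply: (metricType_numDomainType.cvgr_dist_lt ua); rewrite divr_gt0.
- by apply: (metricType_numDomainType.cvgr_dist_lt vb); rewrite divr_gt0.
Unshelve. all: by end_near. Qed.

Lemma continuous_mdist {T : topologicalType} (g h : T -> M) :
  continuous g -> continuous h -> continuous (fun t => mdist (g t) (h t) : R).
Proof. by move=> cg ch t; apply: cvg_mdist; [exact: cg|exact: ch]. Qed.

End mdist_continuity.

Lemma continuous_iter {T : topologicalType} (g : T -> T) n :
  continuous g -> continuous (iter n g).
Proof.
move=> cg; elim: n => [|n IHn] t /=; first exact: cvg_id.
exact: continuous_comp (IHn t) (cg _).
Qed.

Section iterates.
Context {R : realType} {X : pmetricType R}.
Implicit Types (g ginv : X -> X) (gs gsinv : nat -> X -> X).

Lemma continuous_zit g ginv k :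
  continuous g -> continuous ginv -> continuous (zit g ginv k).
Proof. by move=> cg cginv; case: k => n; apply: continuous_iter. Qed.

Lemma iter_unif_cvg gs g n y : unif_cvg gs g -> continuous g ->
  iter n (gs m) y @[m --> \oo] --> iter n g y.
Proof.
move=> gs_g cg; elim: n => [|n IHn] /=; first exact: cvg_cst.
have g_cvg : g (iter n (gs m) y) @[m --> \oo] --> g (iter n g y).
  by apply: continuous_cvg; [exact: cg|exact: IHn].
apply/metricType_numDomainType.cvgrPdist_lt => e e0; near=> m.
rewrite (le_lt_trans (metric_triangle _ (g (iter n (gs m) y)) _)) //.
rewrite (splitr e) ltrD //; near: m.
- by apply: (metricType_numDomainType.cvgr_dist_lt g_cvg); rewrite divr_gt0.
- have [N gsN] := gs_g _ (divr_gt0 e0 (ltr0n _ 2)).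
  by exists N => // m /gsN; rewrite metric_sym.
Unshelve. all: by end_near. Qed.

Lemma zit_unif_cvg gs gsinv g ginv k y :
  unif_cvg gs g -> unif_cvg gsinv ginv -> continuous g -> continuous ginv ->
  zit (gs m) (gsinv m) k y @[m --> \oo] --> zit g ginv k y.
Proof. by move=> ? ? ? ?; case: k => n; apply: iter_unif_cvg. Qed.

End iterates.

Section measurability.
Context {R : realType} {X : pmetricType R}.

Lemma measurable_Bd (x : X) r : measurable (Bd x r : set (borel_type X)).
Proof.
have cdx : continuous (fun y => mdist x y : R).
  by apply: continuous_mdist; [exact: cst_continuous|move=> y; exact: cvg_id].
apply: sub_sigma_algebra.
apply: (@open_comp _ _ (fun y => mdist x y : R) [set t | t < r]).
  by move=> y _; exact: cdx.
exact: open_lt.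
Qed.

Lemma measurable_mdist_gt (g h : X -> X) e : continuous g -> continuous h ->
  measurable ([set y | e < mdist (g y) (h y)] : set (borel_type X)).
Proof.
move=> cg ch; apply: sub_sigma_algebra.
apply: (@open_comp _ _ (fun y => mdist (g y) (h y) : R) [set t | e < t]).
  by move=> y _; exact: continuous_mdist.
exact: open_gt.
Qed.

Lemma measurable_Gamma (f finv : X -> X) x c z :
  continuous f -> continuous finv ->
  measurable (Gamma f finv x c z : set (borel_type X)).
Proof.
move=> cf cfinv; have -> : Gamma f finv x c z = Bd x c `&`
    ~` \bigcup_k [set y | c < mdist (zit f finv k y) (zit f finv k z)].
  apply/seteqP; split=> y [xy le_c]; split=> //.
  - by case=> k _ /=; rewrite ltNge le_c.
  - by move=> k; rewrite leNgt; apply/negP => lt_c; apply: le_c; exists k.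
apply: measurableI; first exact: measurable_Bd.
apply/measurableC/countable_bigcupT_measurable; first exact: countableP.
by move=> k; apply: measurable_mdist_gt; [exact: continuous_zit|exact: cst_continuous].
Qed.

End measurability.

Section liminf_Eset.
Context {R : realType} {X : pmetricType R}.

Definition liminf_Eset (gs gsinv : nat -> X -> X) (z y : X) (e : R) : set int :=
  \bigcup_(m in [set m : nat | (1 <= m)%N])
    \bigcap_(n in [set n : nat | (m <= n)%N]) Eset (gs n) (gsinv n) z y e.

Definition Gamma_seq (gs gsinv : nat -> X -> X) (x : X) (r e : R) (z : X) : set X :=
  [set y | Bd x r y /\ liminf_Eset gs gsinv z y e = set0].

Lemma measurable_Gamma_seq (gs gsinv : nat -> X -> X) x r e z :
  (forall n, continuous (gs n)) -> (forall n, continuous (gsinv n)) ->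
  measurable (Gamma_seq gs gsinv x r e z : set (borel_type X)).
Proof.
move=> cgs cgsinv; have -> : Gamma_seq gs gsinv x r e z = Bd x r `&` ~` \bigcup_k
    \bigcup_(m in [set m : nat | (1 <= m)%N])
      \bigcap_(n in [set n : nat | (m <= n)%N])
        [set y | e < mdist (zit (gs n) (gsinv n) k y) (zit (gs n) (gsinv n) k z)].
  apply/seteqP; split=> y [xy L0]; split=> //.
  - by case=> k _ Lk; move: L0; rewrite -subset0 => /(_ k Lk).
  - by apply/seteqP; split=> // k Lk; apply: L0; exists k.
apply: measurableI; first exact: measurable_Bd.
apply/measurableC/countable_bigcupT_measurable; first exact: countableP.
move=> k; apply: bigcup_measurable => m _; apply: bigcap_measurableType => n _.
by apply: measurable_mdist_gt; [exact: continuous_zit|exact: cst_continuous].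
Qed.

Variables (gs gsinv : nat -> X -> X) (g ginv : X -> X).
Hypotheses (gs_g : unif_cvg gs g) (gsinv_ginv : unif_cvg gsinv ginv).
Hypotheses (cg : continuous g) (cginv : continuous ginv).

Let mdist_zit_cvg z y k :
  mdist (zit (gs m) (gsinv m) k y) (zit (gs m) (gsinv m) k z) @[m --> \oo]
    --> (mdist (zit g ginv k y) (zit g ginv k z) : R).
Proof. by apply: cvg_mdist; apply: zit_unif_cvg. Qed.

Lemma liminf_Eset_eq0_le z y e : liminf_Eset gs gsinv z y e = set0 ->
  forall k, mdist (zit g ginv k y) (zit g ginv k z) <= e.
Proof.
move=> L0 k; rewrite leNgt; apply/negP => e_lt.
have [N _ gtN] := cvgr_gt _ (mdist_zit_cvg z y k) _ e_lt.
suff : liminf_Eset gs gsinv z y e k by rewrite L0.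
by exists N.+1 => // n /= /ltnW /gtN.
Qed.

Lemma le_liminf_Eset_eq0 z y c e : c < e ->
  (forall k, mdist (zit g ginv k y) (zit g ginv k z) <= c) ->
  liminf_Eset gs gsinv z y e = set0.
Proof.
move=> ce le_c; apply/seteqP; split=> // k [m _ Ek].
have [N _ ltN] := cvgr_lt _ (mdist_zit_cvg z y k) _ (le_lt_trans (le_c k) ce).
have := ltN _ (leq_maxr m N); rewrite /= ltNge.
by rewrite (ltW (Ek _ (leq_maxl m N))).
Qed.

Lemma Gamma_seq_sub_Gamma x r e z :
  e <= r -> Gamma_seq gs gsinv x r e z `<=` Gamma g ginv x r z.
Proof.
move=> er y [xy /liminf_Eset_eq0_le le_e]; split=> // k.
exact: le_trans (le_e k) er.
Qed.

Lemma Gamma_sub_Gamma_seq x c r e z :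
  c <= r -> c < e -> Gamma g ginv x c z `<=` Gamma_seq gs gsinv x r e z.
Proof.
move=> cr ce y [xy le_c]; split; first exact: lt_le_trans xy cr.
exact: le_liminf_Eset_eq0 ce le_c.
Qed.

End liminf_Eset.

Theorem theorem3p6 (R : realType) (X : pmetricType R)
  (hX : compact [set: X])
  (mu : {measure set (borel_type X) -> \bar R})
  (hmu : (0 < mu [set: X])%E)
  (fs fsinv : nat -> X -> X) (f finv : X -> X)
  (hfs : forall n, homeo_with (fs n) (fsinv n))
  (hf : homeo_with f finv)
  (hcvg : unif_cvg fs f) (hcvginv : unif_cvg fsinv finv)
  (x : X) :
  UE_point mu f finv x <->
  exists delta : R, 0 < delta /\
    forall z, Bd x delta z ->
      mu [set y | Bd x delta y /\
        \bigcup_(m in [set m : nat | (1 <= m)%N])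
          \bigcap_(n in [set n : nat | (m <= n)%N])
            Eset (fs n) (fsinv n) z y (delta / 3) = set0] = 0%E.
Proof.
have [_ [_ [cf cfinv]]] := hf.
have cfs n : continuous (fs n) by have [_ [_ []]] := hfs n.
have cfsinv n : continuous (fsinv n) by have [_ [_ []]] := hfs n.
split=> [[c [c0 Gamma0]]|[d [d0 Gamma_seq0]]].
- exists c; split=> // z xz.
  apply: (subset_measure0 (measurable_Gamma_seq _ _ _ _ _ _ cfs cfsinv)
    (measurable_Gamma _ _ _ _ _ cf cfinv) _ (Gamma0 z xz)).
  by apply: Gamma_seq_sub_Gamma => //; lra.
- exists (d / 4); split=> [|z xz]; first by rewrite divr_gt0.
  have xz' : Bd x d z by rewrite /Bd /= in xz *; lra.
  apply: (subset_measure0 (measurable_Gamma _ _ _ _ _ cf cfinv)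
    (measurable_Gamma_seq _ _ _ _ _ _ cfs cfsinv) _ (Gamma_seq0 z xz')).
  by apply: Gamma_sub_Gamma_seq => //; lra.
Qed.
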